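(* Let $K\ge2$ and let $\mathbf u^*=\{u_i^*\}_{i=1}^K\subset\mathbb R^d$ satisfy $\|u_i^*-u_j^*\|_2\ge100\sqrt{d\log K}$ for all $i\ne j$. If $\mathbf u=\{u_i\}_{i=1}^K\subset\mathbb R^d$ satisfies $d_{\mathrm{TV}}(p_{\mathbf u}(x),p_{\mathbf u^*}(x))\le\frac1{4K}$, then there is a permutation $\pi$ of $[K]$ with $\|u_i^*-u_{\pi(i)}\|_2\le16\sqrt{d\log K}$ for every $i\in[K]$.
   Context: $p_{\mathbf u}(x)=\frac1K\sum_{i=1}^KN(u_i,I_d)$ denotes the equal-weight Gaussian mixture density with centers $\mathbf u$; $d_{\mathrm{TV}}(P,Q)=\frac12\int|p-q|$. *)

From HB Require Import structures.
From mathcomp Require Import all_boot all_order all_algebra all_fingroup.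
From mathcomp Require Import all_classical all_reals all_analysis.
Set Implicit Arguments. Unset Strict Implicit. Unset Printing Implicit Defensive.
Import Order.TTheory GRing.Theory Num.Theory.
Local Open Scope ring_scope.
Local Open Scope ereal_scope.

Section Defs.
Variable R : realType.

Definition norm2 (d : nat) (x : 'rV[R]_d) : R :=
  Num.sqrt (\sum_(i < d) (x ord0 i) ^+ 2)%R.

Definition gauss_pdf (d : nat) (u x : 'rV[R]_d) : R :=
  ((Num.sqrt (2 * pi)) ^- d * expR (- (norm2 (x - u)) ^+ 2 / 2))%R.

Definition mixture_pdf (K d : nat) (u : 'I_K -> 'rV[R]_d) (x : 'rV[R]_d) : R :=
  (K%:R^-1 * \sum_(i < K) gauss_pdf (u i) x)%R.

(* Lebesgue integral over R^d, written as the iterated one-dimensional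
   Lebesgue integrals (coordinates d-1, ..., 0), in the extended reals.
   For the nonnegative continuous integrands used here it coincides with
   the integral against d-dimensional Lebesgue measure (Tonelli). *)
Fixpoint iint (n : nat) (f : (nat -> R) -> \bar R) : \bar R :=
  match n with
  | 0%N => f (fun _ => 0%R)
  | n'.+1 => \int[@lebesgue_measure R]_(t in setT)
               iint n' (fun v => f (fun k => if k == n' then t else v k))
  end.

Definition integral_Rd (d : nat) (f : 'rV[R]_d -> \bar R) : \bar R :=
  iint d (fun v => f (\row_(i < d) v (nat_of_ord i))).

Definition dTV (d : nat) (p q : 'rV[R]_d -> R) : \bar R :=
  (2%:R^-1)%:E * integral_Rd (fun x => (`|p x - q x|)%:E).

End Defs.

(* Suppose the true centre u*_i is farther than 16 sqrt(d log K) from every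
   estimated centre.  Test both mixtures against the Gaussian weight
   f(x) = exp(-|x - u*_i|^2 / (4d)), which takes values in [0, 1].  Against
   N(w, I_d) it integrates to A exp(-|u*_i - w|^2 / (4d + 2)), where
   A = (1 + 1/(2d))^(-d/2) >= 3/4; hence its integral is at least A/K against
   p_u* (keep only the i-th component) and at most A/(4K) against p_u (every
   centre of p_u is far).  Since 0 <= f <= 1, the difference of these integrals
   is at most the L1 distance 2 d_TV, so d_TV > 1/(4K).  Therefore every true
   centre has an estimated centre within 16 sqrt(d log K), two true centres
   cannot share one because of the 100 sqrt(d log K) separation, and this
   matching is the permutation. *)

From HB Require Import structures.
From mathcomp Require Import all_boot all_order all_algebra all_fingroup.
From mathcomp Require Import all_classical all_reals all_analysis.
From mathcomp Require Import measurable_realfun.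
From mathcomp Require Import ring lra.
Import Order.TTheory GRing.Theory Num.Theory HBNNSimple.
Set Implicit Arguments. Unset Strict Implicit. Unset Printing Implicit Defensive.
Local Open Scope ring_scope.

Section IteratedIntegral.
Variable R : realType.
Local Notation mu := (@lebesgue_measure R).
Local Open Scope ereal_scope.

(* No measurability is assumed: the integral of a nonnegative function is the
   supremum over its simple minorants.  This is how |p_u - p_u*| is integrated
   iteratively without measurability of its partial integrals. *)
Lemma ge0_le_integralT (f g : R -> \bar R) : (forall x, 0 <= f x) ->
  (forall x, f x <= g x) -> \int[mu]_(x in setT) f x <= \int[mu]_(x in setT) g x.
Proof.
move=> f0 fg; have g0 x : 0 <= g x by exact: le_trans (f0 x) (fg x).
rewrite !ge0_integralTE//; apply: ereal_sup_le => _ [h /= hf <-].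
by exists h => //= x; exact: le_trans (hf x) (fg x).
Qed.

Lemma ge0_integralD_le (a : R -> \bar R) (g : R -> R) : (forall x, 0 <= a x) ->
  (forall x, (0 <= g x)%R) -> measurable_fun setT g ->
  \int[mu]_(x in setT) (a x + (g x)%:E) <=
  \int[mu]_(x in setT) a x + \int[mu]_(x in setT) (g x)%:E.
Proof.
move=> a0 g0 mg; rewrite ge0_integralTE; last by move=> x; rewrite adde_ge0 ?lee_fin.
apply: ge_ereal_sup => _ [h /= hag <-].
have := integral_nnsfun mu measurableT h; rewrite patch_setT => <-.
(* A simple minorant h of a + g is below (h - g)^+ + g, and (h - g)^+ <= a. *)
pose b x := Num.max (h x - g x)%R 0%R.
have b0 x : (0 <= b x)%R by rewrite le_max lexx orbT.
have mb : measurable_fun setT b.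
  by apply: measurable_maxr => //; apply: measurable_funB.
apply: (@le_trans _ _ (\int[mu]_(x in setT) ((b x)%:E + (g x)%:E))).
  apply: ge0_le_integralT => x; first by rewrite lee_fin.
  by rewrite -EFinD lee_fin -lerBlDr le_max lexx.
rewrite ge0_integralD//; [|by move=> x _; rewrite lee_fin|exact/measurable_EFinP
  |by move=> x _; rewrite lee_fin|exact/measurable_EFinP].
apply: leeD => //; apply: ge0_le_integralT => x; first by rewrite lee_fin.
rewrite /b; have [//|hg] := leP (h x - g x)%R 0%R.
move: (hag x) (a0 x); case: (a x) => [r hr _|_ _|//]; last by rewrite leey.
by move: hr; rewrite -EFinD !lee_fin lerBlDr.
Qed.

Definition upd (v : nat -> R) (n : nat) (t : R) : nat -> R :=
  fun k => if k == n then t else v k.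

Lemma iintS n (F : (nat -> R) -> \bar R) :
  iint n.+1 F = \int[mu]_(t in setT) iint n (fun v => F (upd v n t)).
Proof. by []. Qed.

Lemma iint_ge0 n (F : (nat -> R) -> \bar R) : (forall v, 0 <= F v) -> 0 <= iint n F.
Proof.
elim: n F => [|n IH] F F0; first exact: F0.
rewrite iintS.
by apply: integral_ge0 => t _; exact: IH.
Qed.

Lemma le_iint n (F G : (nat -> R) -> \bar R) : (forall v, 0 <= F v) ->
  (forall v, F v <= G v) -> iint n F <= iint n G.
Proof.
elim: n F G => [|n IH] F G F0 FG; first exact: FG.
rewrite !iintS.
by apply: ge0_le_integralT => t; [exact: iint_ge0 | exact: IH].
Qed.

Lemma le_integral_Rd d (f g : 'rV[R]_d -> \bar R) : (forall x, 0 <= f x) ->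
  (forall x, f x <= g x) -> integral_Rd f <= integral_Rd g.
Proof. by move=> f0 fg; apply: le_iint. Qed.

Definition prodf n (c : R) (phi : 'I_n -> R -> R) (v : nat -> R) : \bar R :=
  (c * \prod_(k < n) phi k (v k))%:E.

Lemma prodf_ge0 n c (phi : 'I_n -> R -> R) v : (0 <= c)%R ->
  (forall k t, 0 <= phi k t)%R -> 0 <= prodf c phi v.
Proof. by move=> c0 phi0; rewrite lee_fin mulr_ge0// prodr_ge0. Qed.

Lemma prodf_upd n c (phi : 'I_n.+1 -> R -> R) v t :
  prodf c phi (upd v n t) =
  prodf (c * phi ord_max t) (fun k => phi (widen_ord (leqnSn n) k)) v.
Proof.
rewrite /prodf big_ord_recr /= /upd eqxx mulrAC mulrA.
by do 3 f_equal; apply: eq_bigr => k _; rewrite ltn_eqF.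
Qed.

Lemma iint_prodf n c (phi : 'I_n -> R -> R) (I : 'I_n -> R) : (0 <= c)%R ->
  (forall k t, 0 <= phi k t)%R -> (forall k, measurable_fun setT (phi k)) ->
  (forall k, \int[mu]_(t in setT) (phi k t)%:E = (I k)%:E) ->
  iint n (prodf c phi) = (c * \prod_(k < n) I k)%:E.
Proof.
elim: n c phi I => [|n IH] c phi I c0 phi0 mphi int_phi.
  by rewrite /prodf /= !big_ord0.
pose P := (\prod_(k < n) I (widen_ord (leqnSn n) k))%R.
have inner t : iint n (fun v => prodf c phi (upd v n t)) = (c * P * phi ord_max t)%:E.
  have -> : (fun v => prodf c phi (upd v n t)) =
            prodf (c * phi ord_max t) (fun k => phi (widen_ord (leqnSn n) k)).
    by apply/funext => v; exact: prodf_upd.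
  by rewrite (IH _ _ (fun k => I (widen_ord _ k))) ?mulr_ge0// mulrAC.
have P0 : (0 <= P)%R.
  apply: prodr_ge0 => k _; rewrite -lee_fin -int_phi.
  by apply: integral_ge0 => t _; rewrite lee_fin.
rewrite iintS; under eq_integral => t _ do rewrite inner EFinM.
rewrite ge0_integralZl_EFin ?mulr_ge0//.
- by rewrite int_phi -EFinM big_ord_recr mulrA.
- by move=> t _; rewrite lee_fin.
- by apply/measurable_EFinP; exact: mphi.
Qed.

Lemma iint_add_prodf_le n (a : (nat -> R) -> \bar R) c (phi : 'I_n -> R -> R)
    (I : 'I_n -> R) : (forall v, 0 <= a v) -> (0 <= c)%R ->
  (forall k t, 0 <= phi k t)%R -> (forall k, measurable_fun setT (phi k)) ->
  (forall k, \int[mu]_(t in setT) (phi k t)%:E = (I k)%:E) ->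
  iint n (fun v => a v + prodf c phi v) <= iint n a + iint n (prodf c phi).
Proof.
elim: n a c phi I => [//|n IH] a c phi I a0 c0 phi0 mphi int_phi.
pose phi' k := phi (widen_ord (leqnSn n) k).
pose I' k := I (widen_ord (leqnSn n) k).
have phi'0 k t : (0 <= phi' k t)%R by exact: phi0.
have mphi' k : measurable_fun setT (phi' k) by exact: mphi.
have int_phi' k : \int[mu]_(t in setT) (phi' k t)%:E = (I' k)%:E by exact: int_phi.
have upd_prodf t : (fun v => prodf c phi (upd v n t)) = prodf (c * phi ord_max t) phi'.
  by apply/funext => v; rewrite prodf_upd.
pose g t := (c * phi ord_max t * \prod_(k < n) I' k)%R.
have inner t : iint n (fun v => prodf c phi (upd v n t)) = (g t)%:E.
  by rewrite upd_prodf (iint_prodf _ phi'0 mphi' int_phi') ?mulr_ge0.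
have g0 t : (0 <= g t)%R.
  rewrite !mulr_ge0// prodr_ge0// => k _.
  rewrite -lee_fin -int_phi.
  by apply: integral_ge0 => t' _; rewrite lee_fin.
rewrite !iintS; under [X in _ <= _ + X]eq_integral => t _ do rewrite inner.
apply: le_trans (ge0_integralD_le _ _ _); first last.
- by apply: measurable_funM => //; apply: measurable_funM.
- exact: g0.
- by move=> t; apply: iint_ge0.
apply: ge0_le_integralT => t.
  by apply: iint_ge0 => v; rewrite adde_ge0// prodf_ge0.
have -> : (fun v => a (upd v n t) + prodf c phi (upd v n t)) =
          (fun v => a (upd v n t) + prodf (c * phi ord_max t) phi' v).
  by apply/funext => v; rewrite prodf_upd.
rewrite -inner upd_prodf; apply: IH phi'0 mphi' int_phi' => //.
by rewrite mulr_ge0.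
Qed.

Lemma iint_add_sum_prodf_le n (T : Type) (s : seq T) (a : (nat -> R) -> \bar R)
    (c : T -> R) (phi : T -> 'I_n -> R -> R) (I : T -> 'I_n -> R) :
  (forall v, 0 <= a v) -> (forall j, 0 <= c j)%R ->
  (forall j k t, 0 <= phi j k t)%R -> (forall j k, measurable_fun setT (phi j k)) ->
  (forall j k, \int[mu]_(t in setT) (phi j k t)%:E = (I j k)%:E) ->
  iint n (fun v => a v + \sum_(j <- s) prodf (c j) (phi j) v) <=
  iint n a + \sum_(j <- s) iint n (prodf (c j) (phi j)).
Proof.
move=> a0 c0 phi0 mphi int_phi; elim: s => [|j s IH].
  have -> : (fun v => a v + \sum_(j <- [::]) prodf (c j) (phi j) v) = a.
    by apply/funext => v; rewrite big_nil adde0.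
  by rewrite big_nil adde0.
have -> : (fun v => a v + \sum_(i <- j :: s) prodf (c i) (phi i) v) =
  (fun v => (a v + \sum_(i <- s) prodf (c i) (phi i) v) + prodf (c j) (phi j) v).
  by apply/funext => v; rewrite big_cons addeCA addeC.
apply: le_trans (iint_add_prodf_le _ _ _ (mphi j) (int_phi j)) _ => //.
  by move=> v; rewrite adde_ge0// sume_ge0// => i _; rewrite prodf_ge0.
by rewrite big_cons addeCA [X in _ <= X]addeC leeD.
Qed.

End IteratedIntegral.

Section Norm.
Variables (R : realType) (d : nat).
Implicit Types x y z : 'rV[R]_d.

Lemma norm2_ge0 x : 0 <= norm2 x.
Proof. exact: sqrtr_ge0. Qed.

Lemma norm2_sqr x : norm2 x ^+ 2 = \sum_(i < d) x ord0 i ^+ 2.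
Proof. by rewrite sqr_sqrtr// sumr_ge0// => i _; rewrite sqr_ge0. Qed.

Lemma norm2_0 : norm2 (0 : 'rV[R]_d) = 0.
Proof. by rewrite /norm2 big1 ?sqrtr0// => i _; rewrite mxE expr0n. Qed.

Lemma norm2_opp x : norm2 (- x) = norm2 x.
Proof. by rewrite /norm2; congr Num.sqrt; apply: eq_bigr => i _; rewrite mxE sqrrN. Qed.

Lemma norm2_eq0_coord x i : norm2 x = 0 -> x ord0 i = 0.
Proof.
move=> x0; apply/eqP; rewrite -sqrf_eq0; apply/eqP.
move: (norm2_sqr x); rewrite x0 expr0n => /esym/psumr_eq0P; apply => // j _.
exact: sqr_ge0.
Qed.

Lemma sum_mul_le_norm2 x y : \sum_(i < d) x ord0 i * y ord0 i <= norm2 x * norm2 y.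
Proof.
set a := norm2 x; set b := norm2 y.
have [a0|a_neq0] := eqVneq a 0.
  by rewrite a0 mul0r big1// => i _; rewrite (norm2_eq0_coord _ a0) mul0r.
have [b0|b_neq0] := eqVneq b 0.
  by rewrite b0 mulr0 big1// => i _; rewrite (norm2_eq0_coord _ b0) mulr0.
have a0 : 0 < a by rewrite lt0r a_neq0 norm2_ge0.
have b0 : 0 < b by rewrite lt0r b_neq0 norm2_ge0.
have expand : \sum_(i < d) (b * x ord0 i - a * y ord0 i) ^+ 2 =
    2 * (a * b) * (a * b - \sum_(i < d) x ord0 i * y ord0 i).
  rewrite (eq_bigr (fun i => b ^+ 2 * x ord0 i ^+ 2 + a ^+ 2 * y ord0 i ^+ 2
     - 2 * (a * b) * (x ord0 i * y ord0 i))); last by move=> i _; ring.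
  rewrite sumrB big_split /= -!mulr_sumr -!norm2_sqr -/a -/b; ring.
have : 0 <= 2 * (a * b) * (a * b - \sum_(i < d) x ord0 i * y ord0 i).
  by rewrite -expand sumr_ge0// => i _; rewrite sqr_ge0.
by rewrite pmulr_rge0 ?mulr_gt0// subr_ge0.
Qed.

Lemma norm2D_le x y : norm2 (x + y) <= norm2 x + norm2 y.
Proof.
rewrite -(ler_pXn2r (n := 2)) ?nnegrE ?addr_ge0 ?norm2_ge0// sqrrD !norm2_sqr.
have -> : \sum_(i < d) (x + y) ord0 i ^+ 2 = \sum_(i < d) x ord0 i ^+ 2 +
    \sum_(i < d) y ord0 i ^+ 2 + 2 * \sum_(i < d) x ord0 i * y ord0 i.
  rewrite mulr_sumr -!big_split; apply: eq_bigr => i _; rewrite mxE /=; ring.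
by have := sum_mul_le_norm2 x y; lra.
Qed.

Lemma norm2_sub_le x y z : norm2 (x - y) <= norm2 (x - z) + norm2 (y - z).
Proof.
by rewrite -(norm2_opp (y - z)) (le_trans _ (norm2D_le _ _))// opprB addrA subrK.
Qed.

End Norm.

Section Gaussian.
Variable R : realType.
Local Notation mu := (@lebesgue_measure R).

Definition damped_normal (lam c m t : R) : R :=
  expR (- lam * (t - c) ^+ 2) * normal_pdf m 1 t.

Lemma damped_normal_ge0 lam c m t : 0 <= damped_normal lam c m t.
Proof. by rewrite mulr_ge0 ?expR_ge0 ?normal_pdf_ge0. Qed.

Lemma measurable_damped_normal lam c m : measurable_fun setT (damped_normal lam c m).
Proof.
apply: measurable_funM; last exact: measurable_normal_pdf.
apply: measurableT_comp => //; apply: measurable_funM => //.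
by apply: measurable_funX; apply: measurable_funB.
Qed.

Lemma integral_damped_normal (lam c m : R) : 0 < lam ->
  (\int[mu]_(t in setT) (damped_normal lam c m t)%:E =
  ((Num.sqrt (1 + 2 * lam))^-1 * expR (- lam * (c - m) ^+ 2 / (1 + 2 * lam)))%:E)%E.
Proof.
move=> lam0; set a := 1 + 2 * lam; set C := _ * expR _.
have a0 : 0 < a by rewrite addr_gt0// mulr_gt0.
have sa0 : 0 < Num.sqrt a by rewrite sqrtr_gt0.
have pi0 : 0 < pi :> R := pi_gt0 R.
pose s := (Num.sqrt a)^-1; pose m' := (2 * lam * c + m) / a.
have s2 : s ^+ 2 = a^-1 by rewrite /s exprVn sqr_sqrtr// ltW.
have square_completion t :
    expR (- lam * (t - c) ^+ 2) * normal_pdf m 1 t = C * normal_pdf m' s t.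
  rewrite !normal_pdfE ?oner_neq0 ?invr_eq0 ?gt_eqF// /normal_peak /normal_fun s2 expr1n.
  have exponent : - lam * (t - c) ^+ 2 + - (t - m) ^+ 2 / (1 *+ 2) =
      - lam * (c - m) ^+ 2 / a + - (t - m') ^+ 2 / (a^-1 *+ 2).
    by rewrite /m' /a; field; rewrite -/a gt_eqF.
  have peak : Num.sqrt (a^-1 * pi *+ 2) = (Num.sqrt a)^-1 * Num.sqrt (1 * pi *+ 2).
    by rewrite mul1r -!mulrnAr sqrtrM ?invr_ge0 ?ltW// sqrtrV// ltW.
  rewrite peak /C mulrCA -expRD exponent expRD.
  by field; rewrite !gt_eqF// sqrtr_gt0 mul1r mulrn_wgt0.
under eq_integral do rewrite /damped_normal square_completion EFinM.
have C0 : 0 <= C by rewrite mulr_ge0 ?expR_ge0// invr_ge0 ltW.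
rewrite ge0_integralZl_EFin//; first by rewrite integral_normal_pdf mule1.
- by move=> t _; rewrite lee_fin normal_pdf_ge0.
- by apply/measurable_EFinP; exact: measurable_normal_pdf.
Qed.

Lemma gauss_pdf_prod d (w x : 'rV[R]_d) :
  gauss_pdf w x = \prod_(k < d) normal_pdf (w ord0 k) 1 (x ord0 k).
Proof.
under eq_bigr do rewrite (normal_pdfE _ (oner_neq0 R)) /normal_peak /normal_fun.
rewrite /gauss_pdf norm2_sqr big_split /= prodr_const card_ord -expR_sum.
congr (_ * expR _); first by rewrite exprVn expr1n mul1r mulr_natl.
by rewrite -sumrN mulr_suml; apply: eq_bigr => k _; rewrite !mxE expr1n.
Qed.

Lemma gauss_pdf_ge0 d (w x : 'rV[R]_d) : 0 <= gauss_pdf w x.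
Proof. by rewrite gauss_pdf_prod prodr_ge0// => k _; exact: normal_pdf_ge0. Qed.

Definition damped_gauss_pdf d (lam : R) (m w x : 'rV[R]_d) : R :=
  expR (- lam * norm2 (x - m) ^+ 2) * gauss_pdf w x.

Lemma damped_gauss_pdf_prod d lam (m w x : 'rV[R]_d) :
  damped_gauss_pdf lam m w x =
  \prod_(k < d) damped_normal lam (m ord0 k) (w ord0 k) (x ord0 k).
Proof.
rewrite /damped_gauss_pdf gauss_pdf_prod big_split /= norm2_sqr mulr_sumr -expR_sum.
by congr (expR _ * _); apply: eq_bigr => k _; rewrite !mxE.
Qed.

Lemma damped_gauss_pdf_row d c lam (m w : 'rV[R]_d) (v : nat -> R) :
  (c * damped_gauss_pdf lam m w (\row_(i < d) v i))%:E =
  prodf c (fun k => damped_normal lam (m ord0 k) (w ord0 k)) v.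
Proof.
by rewrite damped_gauss_pdf_prod /prodf; under eq_bigr do rewrite mxE.
Qed.

Definition damping_factor d (lam : R) : R := (Num.sqrt (1 + 2 * lam))^-1 ^+ d.

Lemma integral_Rd_damped_gauss_pdf d c lam (m w : 'rV[R]_d) : 0 <= c -> 0 < lam ->
  integral_Rd (fun x => (c * damped_gauss_pdf lam m w x)%:E) =
  (c * (damping_factor d lam * expR (- lam * norm2 (m - w) ^+ 2 / (1 + 2 * lam))))%:E.
Proof.
move=> c0 lam0; rewrite /integral_Rd.
under eq_fun do rewrite damped_gauss_pdf_row.
rewrite (iint_prodf c0 _ _ (fun k => integral_damped_normal _ _ lam0)).
- rewrite big_split /= prodr_const card_ord -expR_sum norm2_sqr mulr_sumr mulr_suml.
  by do 3 f_equal; congr expR; apply: eq_bigr => k _; rewrite !mxE.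
- by move=> *; exact: damped_normal_ge0.
- by move=> k; exact: measurable_damped_normal.
Qed.

Lemma integral_Rd_add_sum_damped_le d (T : Type) (s : seq T) (a : 'rV[R]_d -> \bar R)
    (c : T -> R) lam (m : 'rV[R]_d) (w : T -> 'rV[R]_d) :
  (forall x, 0 <= a x)%E -> (forall j, 0 <= c j) -> 0 < lam ->
  (integral_Rd (fun x => a x + \sum_(j <- s) (c j * damped_gauss_pdf lam m (w j) x)%:E) <=
   integral_Rd a +
   \sum_(j <- s) integral_Rd (fun x => (c j * damped_gauss_pdf lam m (w j) x)%:E))%E.
Proof.
move=> a0 c0 lam0; rewrite /integral_Rd.
under eq_fun do under eq_bigr do rewrite damped_gauss_pdf_row.
under [X in (_ <= _ + X)%E]eq_bigr do under eq_fun do rewrite damped_gauss_pdf_row.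
apply: iint_add_sum_prodf_le => //.
- by move=> *; exact: damped_normal_ge0.
- by move=> *; exact: measurable_damped_normal.
- by move=> j k; exact: integral_damped_normal.
Qed.

End Gaussian.

Section Bounds.
Variable R : realType.

Lemma expR_quarter_le : expR (4^-1 : R) <= 4 / 3.
Proof.
have := expR_ge1Dx (- 4^-1 : R); rewrite expRN.
have E0 := expR_gt0 (4^-1 : R); set E := expR _ in E0 *.
rewrite -[E^-1]mul1r ler_pdivlMr// => h.
by rewrite ler_pdivlMr//; lra.
Qed.

Lemma sqrt1D_le_expR (x : R) : 0 <= x -> Num.sqrt (1 + 2 * x) <= expR x.
Proof.
move=> x0; apply: le_trans (expR_ge1Dx x).
have -> : 1 + x = Num.sqrt ((1 + x) ^+ 2) by rewrite sqrtr_sqr ger0_norm ?addr_ge0.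
by rewrite ler_sqrt ?sqr_ge0//; nra.
Qed.

Lemma damping_factor_ge d : (0 < d)%N -> 3 / 4 <= damping_factor d (4 * d%:R : R)^-1.
Proof.
move=> d0; set lam : R := (4 * d%:R)^-1.
have dR0 : 0 < d%:R :> R by rewrite ltr0n.
have lam0 : 0 <= lam by rewrite invr_ge0 mulr_ge0// ltW.
have B0 : 0 < Num.sqrt (1 + 2 * lam) ^+ d.
  by rewrite exprn_gt0// sqrtr_gt0 ltr_wpDr// mulr_ge0.
have B_le : Num.sqrt (1 + 2 * lam) ^+ d <= 4 / 3.
  apply: le_trans expR_quarter_le.
  have -> : 4^-1 = lam * d%:R :> R by rewrite /lam invfM mulfVK ?gt_eqF.
  by rewrite expRM_natr lerXn2r ?nnegrE ?expR_ge0 ?sqrtr_ge0 ?sqrt1D_le_expR.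
by rewrite /damping_factor exprVn -(invf_div (4 : R) 3) lef_pV2 ?posrE.
Qed.

Lemma far_damping_le d K (n : R) : (0 < d)%N -> (2 <= K)%N ->
  16 * Num.sqrt (d%:R * ln K%:R) <= n ->
  expR (- (4 * d%:R)^-1 * n ^+ 2 / (1 + 2 * (4 * d%:R)^-1)) <= (4 * K)%:R^-1.
Proof.
move=> d0 K2 hn; set lam : R := (4 * d%:R)^-1; set L : R := ln K%:R.
have dR0 : 0 < d%:R :> R by rewrite ltr0n.
have KR2 : 2 <= K%:R :> R by rewrite ler_nat.
have L0 : 0 < L by rewrite ln_gt0// (lt_le_trans _ KR2)// ltr1n.
have lam_d : lam * d%:R = 4^-1 by rewrite /lam invfM mulfVK// gt_eqF.
have lam0 : 0 < lam by rewrite invr_gt0 mulr_gt0.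
have lam_le : lam <= 4^-1 by rewrite -lam_d ler_peMr ?ler1n// ltW.
have n2 : 256 * (d%:R * L) <= n ^+ 2.
  have dL0 : 0 <= d%:R * L by rewrite mulr_ge0 ?ltW.
  have s0 := sqrtr_ge0 (d%:R * L).
  have : (16 * Num.sqrt (d%:R * L)) ^+ 2 <= n ^+ 2.
    by rewrite lerXn2r ?nnegrE ?mulr_ge0// (le_trans _ hn)// mulr_ge0.
  by rewrite exprMn sqr_sqrtr// -natrX.
have lam_n2 : 64 * L <= lam * n ^+ 2.
  apply: le_trans (ler_wpM2l (ltW lam0) n2).
  have -> : lam * (256 * (d%:R * L)) = 256 * (lam * d%:R) * L by ring.
  by rewrite lam_d; lra.
have ln4K : ln (4 * K)%:R <= 3 * L.
  rewrite natrM lnM ?posrE ?(lt_le_trans _ KR2)// -/L.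
  have -> : 4 = 2 * 2 :> R by rewrite -natrM.
  rewrite lnM ?posrE//.
  have : ln 2 <= L by rewrite ler_ln ?posrE// (lt_le_trans _ KR2).
  lra.
have ln4K0 : 0 <= ln (4 * K)%:R :> R by rewrite ln_ge0// natrM; lra.
have K4 : 0 < (4 * K)%:R :> R by rewrite natrM; lra.
rewrite -[X in _ <= X]lnK ?posrE ?invr_gt0// lnV ?posrE// ler_expR !mulNr lerN2.
rewrite ler_pdivlMr; nra.
Qed.

End Bounds.

Lemma perm_of_matching (T : finType) (close : rel T) :
  (forall i, exists j, close i j) ->
  (forall i i' j, close i j -> close i' j -> i = i') ->
  exists pi : {perm T}, forall i, close i (pi i).
Proof.
move=> has_match match_uniq; pose f i := xchoose (has_match i).
have close_f i : close i (f i) := xchooseP (has_match i).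
have f_inj : injective f by move=> i i' fii'; apply: match_uniq (close_f i) _; rewrite fii'.
by exists (perm f_inj) => i; rewrite permE.
Qed.

Section Mixture.
Variable R : realType.

Lemma mul_le_dist_add (f p q : R) : 0 <= f <= 1 -> f * q <= `|p - q| + f * p.
Proof.
case/andP=> f0 f1; rewrite -lerBlDr -mulrBr distrC.
apply: le_trans (ler_wpM2l f0 (ler_norm _)) _.
by rewrite ler_piMl.
Qed.

Lemma damped_mixture_le K d (u ustar : 'I_K -> 'rV[R]_d) (i : 'I_K) lam x :
  0 <= lam ->
  K%:R^-1 * damped_gauss_pdf lam (ustar i) (ustar i) x <=
  `|mixture_pdf u x - mixture_pdf ustar x| +
  \sum_(j < K) K%:R^-1 * damped_gauss_pdf lam (ustar i) (u j) x.
Proof.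
move=> lam0; set f := expR (- lam * norm2 (x - ustar i) ^+ 2).
have f01 : 0 <= f <= 1.
  by rewrite expR_ge0 -expR0 ler_expR mulNr oppr_le0 mulr_ge0 ?sqr_ge0.
have -> : \sum_(j < K) K%:R^-1 * damped_gauss_pdf lam (ustar i) (u j) x =
          f * mixture_pdf u x.
  by rewrite /mixture_pdf !mulr_sumr; apply: eq_bigr => j _; rewrite mulrCA.
apply: le_trans (mul_le_dist_add _ _ f01).
rewrite /damped_gauss_pdf -/f mulrCA; apply: ler_wpM2l; first by case/andP: f01.
rewrite /mixture_pdf; apply: ler_wpM2l; first by rewrite invr_ge0.
by rewrite (bigD1 i)//= lerDl sumr_ge0// => j _; exact: gauss_pdf_ge0.
Qed.

Lemma integral_Rd_damped_mixture_le d K (u ustar : 'I_K -> 'rV[R]_d) (i : 'I_K) lam :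
  0 < lam ->
  ((K%:R^-1 * damping_factor d lam)%:E <=
   integral_Rd (fun x => (`|mixture_pdf u x - mixture_pdf ustar x|)%:E) +
   (\sum_(j < K) K%:R^-1 * (damping_factor d lam *
      expR (- lam * norm2 (ustar i - u j) ^+ 2 / (1 + 2 * lam))))%:E)%E.
Proof.
move=> lam0; have Kinv0 : 0 <= K%:R^-1 :> R by rewrite invr_ge0.
have pointwise x : ((K%:R^-1 * damped_gauss_pdf lam (ustar i) (ustar i) x)%:E <=
    (`|mixture_pdf u x - mixture_pdf ustar x|)%:E +
    \sum_(j < K) (K%:R^-1 * damped_gauss_pdf lam (ustar i) (u j) x)%:E)%E.
  by rewrite sumEFin -EFinD lee_fin damped_mixture_le// ltW.
have <- : integral_Rd (fun x => (K%:R^-1 * damped_gauss_pdf lam (ustar i) (ustar i) x)%:E)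
          = (K%:R^-1 * damping_factor d lam)%:E.
  rewrite integral_Rd_damped_gauss_pdf// subrr norm2_0 expr0n /=.
  by rewrite mulr0 mul0r expR0 mulr1.
apply: le_trans (le_integral_Rd _ pointwise) _ => [x|].
  by rewrite lee_fin mulr_ge0// mulr_ge0 ?expR_ge0 ?gauss_pdf_ge0.
apply: le_trans (integral_Rd_add_sum_damped_le _ _ _ _ _ lam0) _ => [x|//|].
  by rewrite lee_fin.
by rewrite -sumEFin; under eq_bigr do rewrite integral_Rd_damped_gauss_pdf//.
Qed.

Lemma dTV_mixture_gt d K (ustar u : 'I_K -> 'rV[R]_d) (i : 'I_K) :
  (0 < d)%N -> (2 <= K)%N ->
  (forall j, 16 * Num.sqrt (d%:R * ln K%:R) < norm2 (ustar i - u j)) ->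
  (((4 * K)%:R^-1)%:E < dTV (mixture_pdf u) (mixture_pdf ustar))%E.
Proof.
move=> d0 K2 far; set r : R := (4 * K)%:R^-1.
set D := integral_Rd (fun x => (`|mixture_pdf u x - mixture_pdf ustar x|)%:E).
have lam0 : 0 < (4 * d%:R)^-1 :> R by rewrite invr_gt0 mulr_gt0// ltr0n.
have KR0 : 0 < K%:R :> R by rewrite ltr0n (ltn_trans _ K2).
have A_ge := damping_factor_ge R d0.
set A := damping_factor _ _ in A_ge.
have A0 : 0 <= A by apply: le_trans A_ge; lra.
have far_sum_le : \sum_(j < K) K%:R^-1 * (A *
    expR (- (4 * d%:R)^-1 * norm2 (ustar i - u j) ^+ 2 / (1 + 2 * (4 * d%:R)^-1))) <= A * r.
  apply: le_trans (ler_sum _ (fun j _ => ler_wpM2l _ (ler_wpM2l A0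
    (far_damping_le d0 K2 (ltW (far j)))))) _; first by rewrite invr_ge0 ltW.
  by rewrite sumr_const card_ord -[X in X <= _]mulr_natl mulrA mulfV ?mul1r// gt_eqF.
rewrite ltNge; apply/negP; rewrite /dTV -/D => hTV.
have D_le : (D <= (2 * r)%:E)%E.
  have -> : D = (2%:E * ((2%:R^-1)%:E * D))%E by rewrite muleA -EFinM divff ?mul1e.
  by rewrite EFinM lee_wpmul2l.
have : ((K%:R^-1 * A)%:E <= (2 * r + A * r)%:E)%E.
  apply: le_trans (integral_Rd_damped_mixture_le u ustar i lam0) _.
  by rewrite -/A -/D EFinD leeD// lee_fin.
rewrite lee_fin (_ : r = K%:R^-1 / 4); last by rewrite /r natrM invfM mulrC.
have : 0 < K%:R^-1 :> R by rewrite invr_gt0.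
nra.
Qed.

End Mixture.

Theorem mainTheorem12 (R : realType) (d K : nat) (hK : (2 <= K)%N)
  (ustar u : 'I_K -> 'rV[R]_d) :
  (forall i j : 'I_K, i != j ->
     100 * Num.sqrt (d%:R * ln (K%:R : R)) <= norm2 (ustar i - ustar j)) ->
  (dTV (mixture_pdf u) (mixture_pdf ustar) <= ((4 * K)%:R^-1)%:E)%E ->
  exists pi : 'S_K, forall i : 'I_K,
    norm2 (ustar i - u (pi i)) <= 16 * Num.sqrt (d%:R * ln (K%:R : R)).
Proof.
move=> separated hTV; set s := Num.sqrt _.
have [d0|d_gt0] := posnP d.
  by subst d; exists 1%g => i; rewrite /norm2 big_ord0 sqrtr0 mulr_ge0 ?sqrtr_ge0.
have s_gt0 : 0 < s.
  by rewrite sqrtr_gt0 mulr_gt0 ?ltr0n// ln_gt0// ltr1n.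
apply: (@perm_of_matching _ [rel i j | norm2 (ustar i - u j) <= 16 * s]) =>
    [i | i i' j /= close_ij close_i'j].
  have [//|/forallNP far] := pselect (exists j, norm2 (ustar i - u j) <= 16 * s).
  move: hTV; rewrite leNgt => /negP[]; apply: dTV_mixture_gt => // j.
  by rewrite ltNge; apply/negP/far.
apply/eqP/negPn/negP => /separated; rewrite leNgt => /negP[].
apply: le_lt_trans (norm2_sub_le _ _ (u j)) _.
rewrite -/s; lra.
Qed.
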